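(* Let $k\ge 2$ be an even integer and let $f:\{0,1\}^d\to\{0,1\}$ be $\varepsilon$-far from linear. If $x_1,\dots,x_k$ are sampled uniformly and independently from $\{0,1\}^d$, then $$\Pr\Big[\sum_{i=1}^k f(x_i)\neq f(x_1\oplus\cdots\oplus x_k)\Big]\ge\varepsilon,$$ where the sum on the left is taken mod 2.
   Context: $\oplus$ denotes bitwise XOR. A function $f:\{0,1\}^d\to\{0,1\}$ is linear if there is $S\subseteq[d]$ with $f(x)=\sum_{i\in S}x[i]\bmod 2$ for all $x$. $f$ is $\varepsilon$-far from linear if $f$ differs from every linear function on at least an $\varepsilon$ fraction of $\{0,1\}^d$. *)

From mathcomp Require Import all_boot all_order all_algebra.
Set Implicit Arguments. Unset Strict Implicit. Unset Printing Implicit Defensive.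
Import Order.TTheory GRing.Theory Num.Theory.
Local Open Scope ring_scope.

(* Points of {0,1}^d are finite functions 'I_d -> bool; mod-2 addition is addb (xor). *)
Definition cube (d : nat) := {ffun 'I_d -> bool}.

Definition linfun_S (d : nat) (S : {set 'I_d}) (x : cube d) : bool :=
  \big[addb/false]_(i in S) x i.

Definition is_linear (d : nat) (f : cube d -> bool) : Prop :=
  exists S : {set 'I_d}, forall x, f x = linfun_S S x.

Definition dist (R : numFieldType) (d : nat) (f g : cube d -> bool) : R :=
  #|[set x : cube d | f x != g x]|%:R / (2 ^ d)%:R.

Definition eps_far (R : numFieldType) (d : nat) (eps : R) (f : cube d -> bool) : Prop :=
  forall g : cube d -> bool, is_linear g -> eps <= dist R f g.

Definition xorall (d k : nat) (xs : {ffun 'I_k -> cube d}) : cube d :=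
  [ffun j => \big[addb/false]_(i < k) xs i j].

Definition k_test_reject (R : numFieldType) (d k : nat) (f : cube d -> bool) : R :=
  #|[set xs : {ffun 'I_k -> cube d} |
       (\big[addb/false]_(i < k) f (xs i)) != f (xorall xs)]|%:R
  / #|{ffun 'I_k -> cube d}|%:R.

From mathcomp Require Import all_boot all_order all_algebra.
From mathcomp Require Import ring lra.
Set Implicit Arguments. Unset Strict Implicit. Unset Printing Implicit Defensive.
Import Order.TTheory GRing.Theory Num.Theory.
Local Open Scope ring_scope.

(* Write F x = (-1)^(f x) and let F^(S) = E_x[F x chi_S x] be the Fourier
   coefficients of f, where chi_S x = (-1)^(sum_{i in S} x i).  We first develop
   the standard facts: the characters are multiplicative and orthogonal, which
   gives Fourier inversion and Parseval (sum_S F^(S)^2 = 1); moreover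
   F^(S) = 1 - 2 dist(f, linfun_S S).  Expanding F(x_1 xor ... xor x_k) by
   inversion and averaging over independent x_i yields the exact formula
       Pr[reject] = (1 - sum_S F^(S)^(k+1)) / 2.
   If f is eps-far from linear, every F^(S) is at most c = 1 - 2 eps; besides
   sum_S F^(S) = F(0) >= -1.  An elementary inequality for reals a_S with
   sum a_S^2 = 1, sum a_S >= -1 and a_S <= c then gives sum a_S^(k+1) <= c for
   even k >= 2, i.e. Pr[reject] >= eps. *)

Lemma signr_big_addb (R : pzRingType) (I : Type) (r : seq I) (P : pred I)
    (b : I -> bool) :
  (-1) ^+ (\big[addb/false]_(i <- r | P i) b i) =
  \prod_(i <- r | P i) (-1) ^+ b i :> R.
Proof. exact: (big_morph (fun b : bool => (-1) ^+ b : R) (@signr_addb R)). Qed.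

Lemma signr_addb_neq (R : comNzRingType) (a b : bool) :
  (-1) ^+ (a (+) b) = 1 - 2 * (a != b)%:R :> R.
Proof. by case: a; case: b; rewrite /= ?expr0 ?expr1; ring. Qed.

Lemma sum_indicator (R : pzSemiRingType) (T : finType) (P : pred T) :
  \sum_x (P x)%:R = #|[set x | P x]|%:R :> R.
Proof.
rewrite -natr_sum -sum1dep_card [in RHS]big_mkcond /=.
by congr _%:R; apply: eq_bigr => x _; case: (P x).
Qed.

Section CubeFourier.
Variables (R : numFieldType) (d : nat).

Definition cube_zero : cube d := [ffun _ => false].
Definition cube_add (x y : cube d) : cube d := [ffun j => x j (+) y j].

Definition chi (S : {set 'I_d}) (x : cube d) : R := (-1) ^+ linfun_S S x.

Definition cube_size : R := (2 ^ d)%:R.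

Lemma card_cube : #|{ffun 'I_d -> bool}| = (2 ^ d)%N.
Proof. by rewrite card_ffun card_bool card_ord. Qed.

Lemma cube_size_neq0 : cube_size != 0.
Proof. by rewrite pnatr_eq0 -lt0n expn_gt0. Qed.

Lemma chi_prod S x : chi S x = \prod_(j in S) (-1) ^+ x j.
Proof. exact: signr_big_addb. Qed.

Lemma linfun_S_add S x y :
  linfun_S S (cube_add x y) = linfun_S S x (+) linfun_S S y.
Proof. by rewrite /linfun_S -big_split; apply: eq_bigr => i _; rewrite ffunE. Qed.

Lemma linfun_S_xorall k S (xs : {ffun 'I_k -> cube d}) :
  linfun_S S (xorall xs) = \big[addb/false]_(i < k) linfun_S S (xs i).
Proof.
by rewrite /linfun_S (@exchange_big _ _ addb); apply: eq_bigr => j _; rewrite ffunE.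
Qed.

Lemma chi_add S x y : chi S (cube_add x y) = chi S x * chi S y.
Proof. by rewrite /chi linfun_S_add signr_addb. Qed.

Lemma chi_xorall k S (xs : {ffun 'I_k -> cube d}) :
  chi S (xorall xs) = \prod_(i < k) chi S (xs i).
Proof. by rewrite /chi linfun_S_xorall signr_big_addb. Qed.

(* Orthogonality: the characters at a point z sum to 2^d if z = 0, else to 0.
   Both sides expand \prod_j (1 + (-1)^(z j)) over the subsets S of 'I_d. *)
Lemma sum_chi z :
  \sum_(S : {set 'I_d}) chi S z = if z == cube_zero then cube_size else 0.
Proof.
have expand : \sum_(S : {set 'I_d}) chi S z =
    \prod_(j < d) \sum_(b : bool) (if b then (-1) ^+ z j else 1).
  rewrite bigA_distr_bigA /=.
  rewrite (reindex (fun phi : {ffun 'I_d -> bool} => [set j | phi j])) /=.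
    apply: eq_bigr => phi _; rewrite chi_prod big_mkcond /=.
    by apply: eq_bigr => j _; rewrite inE.
  exists (fun S : {set 'I_d} => [ffun j => j \in S]) => [phi _|S _].
    by apply/ffunP => j; rewrite ffunE inE.
  by apply/setP => j; rewrite inE ffunE.
rewrite expand; under eq_bigr do rewrite big_bool /=.
case: eqP => [->|/eqP nz].
  under eq_bigr do rewrite ffunE expr0.
  by rewrite prodr_const card_ord /cube_size natrX.
have [j zj] : exists j, z j.
  apply/existsP; apply: contraNT nz => /existsPn z0.
  by apply/eqP/ffunP => j; rewrite ffunE; apply/negbTE/z0.
by rewrite (bigD1 j) //= zj expr1 addNr mul0r.
Qed.

Lemma cube_add_eq0 x y : (cube_add x y == cube_zero) = (x == y).
Proof.
apply/eqP/eqP => [xy0|->]; last by apply/ffunP => j; rewrite !ffunE addbb.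
apply/ffunP => j; move/ffunP: xy0 => /(_ j); rewrite !ffunE.
by case: (x j); case: (y j).
Qed.

Variable f : cube d -> bool.

Definition sgnf x : R := (-1) ^+ f x.
Definition fourier S : R := cube_size^-1 * \sum_x sgnf x * chi S x.

Lemma sgnf_sqr x : sgnf x * sgnf x = 1.
Proof. by rewrite -signr_addb addbb. Qed.

Lemma fourier_inversion y : \sum_S fourier S * chi S y = sgnf y.
Proof.
transitivity (cube_size^-1 * \sum_S \sum_x sgnf x * chi S (cube_add x y)).
  rewrite big_distrr /=; apply: eq_bigr => S _; rewrite -mulrA big_distrl /=.
  by congr (_ * _); apply: eq_bigr => x _; rewrite chi_add mulrA.
rewrite exchange_big /=.
under eq_bigr do rewrite -big_distrr /= sum_chi cube_add_eq0.
rewrite (bigD1 y) //= eqxx big1 ?addr0; last by move=> x /negbTE ->; rewrite mulr0.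
by rewrite mulrC -mulrA mulfV ?cube_size_neq0 // mulr1.
Qed.

(* At the origin all characters are 1, so the coefficients sum to sgnf 0. *)
Lemma sum_fourier : \sum_S fourier S = sgnf cube_zero.
Proof.
rewrite -fourier_inversion; apply: eq_bigr => S _.
by rewrite /chi /linfun_S big1 ?mulr1 // => i _; rewrite ffunE.
Qed.

Lemma parseval : \sum_S fourier S ^+ 2 = 1.
Proof.
transitivity (cube_size^-1 * \sum_y sgnf y * \sum_S fourier S * chi S y).
  under [in RHS]eq_bigr do rewrite big_distrr.
  rewrite exchange_big big_distrr /=; apply: eq_bigr => S _.
  rewrite expr2 {2}/fourier mulrCA big_distrr; congr (_ * _).
  by apply: eq_bigr => y _; rewrite mulrCA.
under eq_bigr do rewrite fourier_inversion sgnf_sqr.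
by rewrite sumr_const card_cube -/cube_size mulVf ?cube_size_neq0.
Qed.

Lemma fourier_dist S : fourier S = 1 - 2 * dist R f (linfun_S S).
Proof.
have disagree x : sgnf x * chi S x = 1 - 2 * (f x != linfun_S S x)%:R.
  by rewrite -signr_addb signr_addb_neq.
rewrite /fourier /dist; under eq_bigr do rewrite disagree.
rewrite sumrB -big_distrr /= sum_indicator sumr_const card_cube -/cube_size.
by rewrite mulrBr mulVf ?cube_size_neq0 // mulrCA [_^-1 * _]mulrC.
Qed.

Lemma test_correlation k :
  \sum_(xs : {ffun 'I_k -> cube d}) (\prod_(i < k) sgnf (xs i)) * sgnf (xorall xs)
  = cube_size ^+ k * \sum_S fourier S ^+ k.+1.
Proof.
under eq_bigr => xs _ do rewrite -(fourier_inversion (xorall xs)) big_distrr /=.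
rewrite exchange_big big_distrr /=; apply: eq_bigr => S _.
under eq_bigr do rewrite chi_xorall mulrCA -big_split /=.
rewrite -big_distrr /= -(bigA_distr_bigA (fun _ x => sgnf x * chi S x)) /=.
rewrite prodr_const card_ord.
have -> : \sum_x sgnf x * chi S x = cube_size * fourier S.
  by rewrite /fourier mulrA mulfV ?cube_size_neq0 // mul1r.
by rewrite exprMn mulrCA -exprS.
Qed.

Lemma test_correlation_reject k :
  \sum_(xs : {ffun 'I_k -> cube d}) (\prod_(i < k) sgnf (xs i)) * sgnf (xorall xs)
  = #|{ffun 'I_k -> cube d}|%:R -
    2 * #|[set xs : {ffun 'I_k -> cube d} |
            (\big[addb/false]_(i < k) f (xs i)) != f (xorall xs)]|%:R.
Proof.
under eq_bigr do rewrite /sgnf -signr_big_addb -signr_addb signr_addb_neq.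
by rewrite sumrB -big_distrr /= sumr_const sum_indicator.
Qed.

Lemma k_test_reject_fourier k :
  k_test_reject R k f = (1 - \sum_S fourier S ^+ k.+1) / 2.
Proof.
have size_gt0 : 0 < cube_size ^+ k by rewrite exprn_gt0 // ltr0n expn_gt0.
have := test_correlation k; rewrite test_correlation_reject.
rewrite /k_test_reject card_ffun card_cube card_ord natrX -/cube_size => corr.
apply/eqP; rewrite eqr_div ?pnatr_eq0 ?lt0r_neq0 //; apply/eqP.
by rewrite mulrBl mul1r [_ * cube_size ^+ k]mulrC -corr; ring.
Qed.

End CubeFourier.

Section PowerSumBound.
Variable R : realFieldType.

Lemma odd_power_le_cap (x c : R) (n : nat) :
  ~~ odd n -> 0 <= c -> -1 <= x <= 1 -> x <= c -> x ^+ n.+3 <= c * x ^+ 2.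
Proof.
move=> n_even c_ge0 /andP [x_geN1 x_le1] x_le_c.
have -> : x ^+ n.+3 = x ^+ n.+1 * x ^+ 2 by rewrite -exprD addn2.
have [x_ge0 | x_lt0] := lerP 0 x.
  apply: ler_wpM2r; first exact: sqr_ge0.
  by rewrite exprS; apply: le_trans x_le_c; apply: ler_piMr => //; apply: exprn_ile1.
apply: (@le_trans _ _ 0); last by rewrite mulr_ge0 // sqr_ge0.
rewrite mulr_le0_ge0 ?sqr_ge0 // exprS mulr_le0_ge0 ?(ltW x_lt0) //.
exact: exprn_even_ge0.
Qed.

(* The power-sum inequality behind the test: if sum a_i^2 = 1, sum a_i >= -1
   and every a_i is at most c, then sum a_i^(k+1) <= c for even k >= 2.
   For c >= 0 this follows termwise from odd_power_le_cap; for c < 0 all a_i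
   are negative, forcing -a_i = a_i^2, hence every a_i = -1. *)
Lemma power_sum_le (I : finType) (a : I -> R) (c : R) (k : nat) (i0 : I) :
  (2 <= k)%N -> ~~ odd k -> (forall i, a i <= c) -> \sum_i a i ^+ 2 = 1 ->
  -1 <= \sum_i a i -> \sum_i a i ^+ k.+1 <= c.
Proof.
move=> k_ge2 k_even a_le_c sum_sqr sum_geN1.
have a_bound i : -1 <= a i <= 1.
  have : a i ^+ 2 <= 1.
    by rewrite -sum_sqr (bigD1 i) //= lerDl sumr_ge0 // => j _; apply: sqr_ge0.
  by move=> sqr_le1; apply/andP; split; nra.
have [c_ge0 | c_lt0] := lerP 0 c.
  apply: (@le_trans _ _ (\sum_i c * a i ^+ 2)); last first.
    by rewrite -big_distrr /= sum_sqr mulr1.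
  apply: ler_sum => i _; case: k k_ge2 k_even => [|[|n]] // _ /= n_even.
  rewrite negbK in n_even.
  exact: odd_power_le_cap n_even c_ge0 (a_bound i) (a_le_c i).
have a_neg i : a i < 0 by apply: le_lt_trans c_lt0.
have gap_ge0 i : 0 <= - a i - a i ^+ 2.
  by case/andP: (a_bound i) => ? ?; have := a_neg i; nra.
have gap_sum0 : \sum_i (- a i - a i ^+ 2) = 0.
  apply/le_anti/andP; split; last by apply: sumr_ge0 => i _.
  by rewrite sumrB sumrN sum_sqr; lra.
have a_eqN1 i : a i = -1.
  have gap0 := psumr_eq0P (fun i _ => gap_ge0 i) gap_sum0 (i := i) isT.
  by have := a_neg i; nra.
rewrite (eq_bigr (fun i => - a i ^+ 2)); last first.
  by move=> i _; rewrite a_eqN1 -signr_odd /= (negbTE k_even) sqrrN expr1n.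
by rewrite sumrN sum_sqr; have := a_le_c i0; rewrite a_eqN1; lra.
Qed.

End PowerSumBound.

Theorem theorem1p2 (R : realFieldType) (d k : nat) (eps : R)
    (f : cube d -> bool) :
  (2 <= k)%N -> ~~ odd k -> eps_far eps f ->
  eps <= k_test_reject R k f.
Proof.
move=> k_ge2 k_even far.
have coef_le S : fourier R f S <= 1 - 2 * eps.
  by rewrite fourier_dist; have := far _ (ex_intro _ S (fun _ => erefl)); lra.
have sum_geN1 : -1 <= \sum_S fourier R f S.
  by rewrite sum_fourier /sgnf; case: (f _); rewrite ?expr0 ?expr1 //; lra.
have := power_sum_le set0 k_ge2 k_even coef_le (parseval R f) sum_geN1.
rewrite k_test_reject_fourier; lra.
Qed.
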